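(* For all integers $p\ge 1$, $$E\,|C(p;\mathbf U_1)-C(p-1;\mathbf U_1)|\le 2.$$
   Context: Let $U_1,U_2,\ldots$ be i.i.d. uniform random variables on $[0,1]$ and $\mathbf U_k=(U_k,U_{k+1},\ldots)$ for $k\ge1$. Define $C(n;\mathbf U_k)$ for integers $n\ge0$ and $k\ge1$ recursively by $C(0;\mathbf U_k)=0$ and $C(n;\mathbf U_k)=n-1+C(\lfloor nU_k\rfloor;\mathbf U_{k+1})$ for $n\ge1$. (This is the number of comparisons made by Quickselect to find the minimum of $n$ distinct numbers.) *)

From HB Require Import structures.
From mathcomp Require Import all_boot all_order all_algebra.
From mathcomp Require Import all_classical all_reals all_analysis.
Set Implicit Arguments. Unset Strict Implicit. Unset Printing Implicit Defensive.
Import Order.TTheory GRing.Theory Num.Theory.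
Local Open Scope classical_set_scope.
Local Open Scope ring_scope.

(* Quickselect comparison count with fuel:
   Cfuel f n k u = C(n; (u k, u (k+1), ...)) computed with at most f recursive calls.
   C(0;.) = 0,  C(n;U_k) = n-1 + C(floor(n U_k); U_{k+1}). *)
Fixpoint Cfuel {R : realType} (f n k : nat) (u : nat -> R) : nat :=
  match f with
  | 0 => 0
  | f'.+1 =>
    match n with
    | 0 => 0
    | n'.+1 => n' + Cfuel f' (Num.truncn (n%:R * u k)) k.+1 u
    end
  end.

(* Whenever all u_j lie in [0,1), floor(n u_k) < n so n levels of fuel suffice
   and C agrees with the recursive definition of the paper. *)
Definition C {R : realType} (n : nat) (u : nat -> R) (k : nat) : nat :=
  Cfuel n n k u.

Definition mutually_independent {d} {T : measurableType d} {R : realType}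
  (P : probability T R) (X : nat -> {RV P >-> R}) : Prop :=
  forall (s : seq nat) (B : nat -> set R),
    uniq s -> (forall i, measurable (B i)) ->
    P (\bigcap_(i in [set` s]) (X i @^-1` B i)) =
    (\prod_(i <- s) P (X i @^-1` B i))%E.

Definition uniform01 {d} {T : measurableType d} {R : realType}
  (P : probability T R) (X : {RV P >-> R}) : Prop :=
  forall B : set R, measurable B ->
    P (X @^-1` B) = (@lebesgue_measure R) (B `&` `[0%R, 1%R]).

From HB Require Import structures.
From mathcomp Require Import all_boot all_order all_algebra.
From mathcomp Require Import all_classical all_reals all_analysis.
From mathcomp Require Import measurable_realfun ring lra zify.
Import Order.TTheory GRing.Theory Num.Theory.
Local Open Scope classical_set_scope.
Local Open Scope ring_scope.

(* Write D_n = C(n; U_k, ...) - C(n-1; U_k, ...). With m = floor(n U_k) and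
   m' = floor((n-1) U_k) we have m - m' in {0, 1}, hence
   D_n = 1 + [m = m' + 1] D_m(U_{k+1}, ...) >= 0, and m = m' + 1 = j happens
   exactly when U_k lies in [j/n, j/(n-1)), an interval of length j/(n(n-1)).
   By independence E D_n = W_n with W_n = 1 + sum_(2 <= j < n) j/(n(n-1)) W_j,
   and since sum_(j < n) j = n(n-1)/2, induction gives W_n <= 2. *)

Lemma sum_nat_mul2 {R : nzSemiRingType} (n : nat) :
  (\sum_(0 <= j < n) (j%:R : R)) * 2 = n%:R * n.-1%:R.
Proof.
rewrite -natr_sum bin2_sum -!natrM; congr _%:R.
by rewrite -[2%N]/(2`!) bin_ffact ffactnS ffactn1.
Qed.

Section floor_arith.
Context {R : archiRealFieldType}.

Lemma truncn_mul_lt (n : nat) (x : R) : (0 < n)%N -> 0 <= x < 1 ->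
  (Num.truncn (n%:R * x) < n)%N.
Proof.
move=> n_gt0 /andP[x_ge0 x_lt1].
by rewrite truncn_lt_nat ?mulr_ge0// -[ltRHS]mulr1 ltr_pM2l ?ltr0n.
Qed.

Lemma truncn_mulS (n : nat) (x : R) : 0 <= x < 1 ->
  (Num.truncn (n%:R * x) <= Num.truncn (n.+1%:R * x)
     <= (Num.truncn (n%:R * x)).+1)%N.
Proof.
move=> /andP[x_ge0 x_lt1]; rewrite le_truncn ?ler_wpM2r ?ler_nat//=.
rewrite truncn_le_nat -addn1 natrD mulrDl mul1r -[_.+2]addn1 [ltRHS]natrD.
exact: ltrD (truncnS_gt _) x_lt1.
Qed.

Definition jump_itv (n j : nat) : set R := `[j%:R / n%:R, j%:R / n.-1%:R[.

Lemma in_jump_itv n j (x : R) : (1 < n)%N -> 0 <= x < 1 ->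
  (x \in jump_itv n j) =
  (j <= Num.truncn (n%:R * x))%N && (Num.truncn (n.-1%:R * x) < j)%N.
Proof.
move=> n_gt1 /andP[x_ge0 _]; rewrite /jump_itv mem_setE in_itv /=.
rewrite truncn_ge_nat ?truncn_lt_nat ?mulr_ge0//.
have n_gt0 : (0 < n)%N by exact: ltnW.
have n1_gt0 : (0 < n.-1)%N by rewrite -ltnS prednK.
by rewrite ler_pdivrMr ?ltr_pdivlMr ?ltr0n // !(mulrC x).
Qed.

End floor_arith.

Section quickselect_increment.
Context {R : realType}.

Definition unit_valued (u : nat -> R) := forall i, 0 <= u i < 1.

(* D_n(u_k, u_(k+1), ...) of the proof idea, computed with fuel f; Edelta below
   is W_n. *)
Fixpoint Cdelta (f n k : nat) (u : nat -> R) : R :=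
  match f with
  | 0 => 0
  | f'.+1 => if (1 < n)%N then
       1 + \sum_(2 <= j < n) \1_(jump_itv n j) (u k) * Cdelta f' j k.+1 u
     else 0
  end.

Lemma Cdelta_ge0 f n k u : 0 <= Cdelta f n k u.
Proof.
elim: f n k => [|f IH] n k //=; case: ifP => // _.
by rewrite addr_ge0 ?sumr_ge0// => j _; rewrite mulr_ge0.
Qed.

Section unit_path.
Variables (u : nat -> R) (hu : unit_valued u).

Lemma Cfuel_enough f g n k : (n <= f)%N -> (n <= g)%N ->
  Cfuel f n k u = Cfuel g n k u.
Proof.
elim: f g n k => [|f IH] [|g] [|n] k //= nf ng; congr (_ + _)%N.
have : (Num.truncn (n.+1%:R * u k) < n.+1)%N := truncn_mul_lt n.+1 _ isT (hu k).
by move=> ?; apply: IH; lia.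
Qed.

Lemma CS n k : C n.+1 u k = (n + C (Num.truncn (n.+1%:R * u k)) u k.+1)%N.
Proof.
rewrite /C /=; congr (_ + _)%N; apply: Cfuel_enough => //.
have : (Num.truncn (n.+1%:R * u k) < n.+1)%N := truncn_mul_lt n.+1 _ isT (hu k).
by lia.
Qed.

Lemma C1 k : C 1 u k = 0%N.
Proof.
have : (Num.truncn (1%:R * u k) < 1)%N := truncn_mul_lt 1 _ isT (hu k).
by rewrite CS; case: Num.truncn.
Qed.

Lemma C_increment f n k : (0 < n)%N -> (n <= f)%N ->
  (C n u k)%:R - (C n.-1 u k)%:R = Cdelta f n k u.
Proof.
elim: f n k => [|f IH] [|[|n]] k //= _ nf.
  by rewrite C1 subrr.
rewrite !CS; set m := Num.truncn _; set m' := Num.truncn _.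
have /andP[m'_le_m m_le_m'S] : (m' <= m <= m'.+1)%N := truncn_mulS _ _ (hu k).
have m_lt : (m < n.+2)%N := truncn_mul_lt n.+2 _ isT (hu k).
under eq_bigr => j _ do rewrite indicE in_jump_itv ?(hu k)// -/m -/m'.
have -> : (n.+1 + C m u k.+1)%:R - (n + C m' u k.+1)%:R =
    1 + ((C m u k.+1)%:R - (C m' u k.+1)%:R) :> R.
  by rewrite !natrD -natr1; ring.
congr (1 + _).
have [m_eq|m_eq] : m = m' \/ m = m'.+1 by lia.
  by rewrite m_eq subrr big1// => j _; rewrite ltnNge andbN mul0r.
under eq_bigr => j _ do rewrite m_eq -eqn_leq.
have [m'0|m'_gt0] : m' = 0%N \/ (0 < m')%N by lia.
  rewrite m_eq m'0 C1 subrr big1_seq// => j /andP[_].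
  by rewrite mem_index_iota => /andP[j_ge2 _]; rewrite gtn_eqF ?mul0r.
rewrite (bigD1_seq m'.+1) ?mem_index_iota ?iota_uniq //=; last by lia.
rewrite eqxx mul1r big1 ?addr0 => [|j /negbTE ->]; last by rewrite mul0r.
by rewrite -IH /= ?m_eq //; lia.
Qed.

End unit_path.

Fixpoint Edelta (f n : nat) : R :=
  match f with
  | 0 => 0
  | f'.+1 => if (1 < n)%N then
       1 + \sum_(2 <= j < n) j%:R / (n%:R * n.-1%:R) * Edelta f' j
     else 0
  end.

Lemma Edelta_le2 f n : Edelta f n <= 2.
Proof.
elim: f n => [|f IH] n //=; case: ifP => // n_gt1.
have nn1_gt0 : 0 < n%:R * n.-1%:R :> R by rewrite mulr_gt0 ?ltr0n//; lia.
suff : \sum_(2 <= j < n) j%:R / (n%:R * n.-1%:R) * Edelta f j <= 1 by lra.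
apply: le_trans (_ : \sum_(2 <= j < n) j%:R / (n%:R * n.-1%:R) * 2 <= 1).
  by apply: ler_sum => j _; rewrite ler_wpM2l ?divr_ge0.
rewrite -!big_distrl /= mulrAC ler_pdivrMr // mul1r -sum_nat_mul2 ler_wpM2r //.
by rewrite (@big_cat_nat _ _ _ 2 0 n) //= lerDr sumr_ge0.
Qed.

End quickselect_increment.

Section nat_valued_measurable.
Context {d d' : measure_display} {T : measurableType d} {Y : measurableType d'}.

(* nat carries the discrete sigma-algebra. *)
Lemma measurable_fun_nat (f : nat -> Y) : measurable_fun setT f.
Proof. by move=> _ B _; exact: I. Qed.

Lemma measurable_fun_natdep (t : T -> nat) (g : nat -> T -> Y) :
  measurable_fun setT t -> (forall m, measurable_fun setT (g m)) ->
  measurable_fun setT (fun w => g (t w) w).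
Proof.
move=> mt mg _ B mB; rewrite setTI.
have -> : (fun w => g (t w) w) @^-1` B =
    \bigcup_m (t @^-1` [set m] `&` g m @^-1` B).
  by apply/seteqP; split => [w Bw | w [m _ [/= -> //]]]; exists (t w).
apply: bigcupT_measurable => m; apply: measurableI.
  by rewrite -[_ @^-1` _]setTI; exact: mt.
by rewrite -[_ @^-1` _]setTI; exact: mg.
Qed.

Lemma measurable_fun_nat2 (G : nat -> nat -> Y) (t1 t2 : T -> nat) :
  measurable_fun setT t1 -> measurable_fun setT t2 ->
  measurable_fun setT (fun w => G (t1 w) (t2 w)).
Proof.
move=> mt1 mt2.
apply: (measurable_fun_natdep t1 (fun a w => G a (t2 w))) => // a.
exact: measurableT_comp (measurable_fun_nat (G a)) mt2.
Qed.

End nat_valued_measurable.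

Lemma measurable_truncn (R : realType) : measurable_fun [set: R] Num.truncn.
Proof.
move=> _ B _; rewrite setTI.
have -> : Num.truncn @^-1` B =
    \bigcup_(m in B) (Num.truncn @^-1` [set m] : set R).
  by apply/seteqP; split => [x Bx | x [m Bm /= ->] //]; exists (Num.truncn x).
apply: bigcup_measurable => -[|m] _.
  rewrite (_ : _ @^-1` _ = [set` (`]-oo, 1%:R[ : interval R)]).
    exact: measurable_itv.
  by apply/seteqP; split => x;
    rewrite /= in_itv /= -truncn_le_nat leqn0 => /eqP.
rewrite (_ : _ @^-1` _ = [set` (`[m.+1%:R, m.+2%:R[ : interval R)]).
  exact: measurable_itv.
apply/seteqP; split => x; rewrite /= in_itv /= -truncn_gt_nat -truncn_le_nat.
  by move=> ->; rewrite leqnn andbT.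
by rewrite andbC -eqn_leq => /eqP.
Qed.

Lemma ge0_integral_1D_sum {d} {T : measurableType d} {R : realType}
    (mu : {measure set T -> \bar R}) (A : set T) (F : nat -> T -> R) r :
  measurable A -> (forall j, measurable_fun setT (F j)) ->
  (forall j w, 0 <= F j w) ->
  (\int[mu]_(w in A) (1 + \sum_(j <- r) F j w)%:E =
   mu A + \sum_(j <- r) \int[mu]_(w in A) (F j w)%:E)%E.
Proof.
move=> mA mF F_ge0.
under eq_integral => w _ do rewrite EFinD -sumEFin.
rewrite ge0_integralD //; last 2 first.
- by move=> w _; rewrite sume_ge0 // => j _; rewrite lee_fin.
- by apply: emeasurable_sum => j; apply/measurable_funTS/measurable_EFinP.
rewrite integral_cst // mul1e ge0_integral_sum //.
- by move=> j; apply/measurable_funTS/measurable_EFinP.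
- by move=> j w _; rewrite lee_fin.
Qed.

Section cylinder.
Context {R : realType} {d : measure_display} {T : measurableType d}.
Variables (P : probability T R) (U : nat -> {RV P >-> R}).

Definition cylinder (s : seq nat) (B : nat -> set R) : set T :=
  \bigcap_(i in [set` s]) (U i @^-1` B i).

Lemma cylinder_nil B : cylinder [::] B = setT.
Proof. by apply/seteqP; split. Qed.

Lemma measurable_cylinder s B : (forall i, measurable (B i)) ->
  measurable (cylinder s B).
Proof.
by move=> mB; apply: bigcap_measurableType => i _; exact: measurable_funPTI.
Qed.

Lemma cylinder_cons s B k I : k \notin s ->
  cylinder (k :: s) [eta B with k |-> I] = cylinder s B `&` U k @^-1` I.
Proof.
move=> ks; apply/seteqP; split => w.
  move=> Hw; split; last by have := Hw k; rewrite /= mem_head eqxx => /(_ isT).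
  move=> i /= iS; move: (Hw i); rewrite /= in_cons iS orbT => /(_ isT).
  by case: eqP => // ik; move: iS; rewrite ik (negbTE ks).
move=> [Hs Hk] i /=; rewrite in_cons => /orP[/eqP ->|iS]; first by rewrite eqxx.
by case: eqP => [ik|_]; [move: iS; rewrite ik (negbTE ks) | exact: Hs].
Qed.

Lemma integral_indic_cylinder s B k I (g : T -> R) : k \notin s ->
  (\int[P]_(w in cylinder s B) (\1_I (U k w) * g w)%:E =
   \int[P]_(w in cylinder (k :: s) [eta B with k |-> I]) (g w)%:E)%E.
Proof.
move=> ks; rewrite cylinder_cons // integral_mkcondr; apply: eq_integral => w _.
by rewrite epatch_indic /= -EFinM mulrC.
Qed.

Lemma measurable_indicRV (A : set R) k : measurable A ->
  measurable_fun setT (fun w => \1_A (U k w) : R).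
Proof.
move=> mA; change (measurable_fun setT ((\1_A : R -> R) \o U k)).
exact: measurableT_comp (measurable_indic mA) (measurable_funPT (U k)).
Qed.

Lemma measurable_Cdelta f n k :
  measurable_fun setT (fun w => Cdelta f n k (fun i => U i w)).
Proof.
elim: f n k => [|f IH] n k /=; first exact: measurable_cst.
case: (1 < n)%N; last exact: measurable_cst.
apply: measurable_funD; first exact: measurable_cst.
apply: measurable_sum => j; apply: measurable_funM; last exact: IH.
by apply: measurable_indicRV; exact: measurable_itv.
Qed.

Lemma measurable_Cfuel f n k :
  measurable_fun setT (fun w => Cfuel f n k (fun i => U i w)).
Proof.
elim: f n k => [|f IH] [|n] k /=; try exact: measurable_cst.
apply: (measurable_fun_natdep (fun w => Num.truncn (n.+1%:R * U k w))
  (fun m w => (n + Cfuel f m k.+1 (fun i => U i w))%N)).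
  by apply: measurableT_comp (measurable_truncn R) _; exact: measurable_funM.
by move=> m; exact: measurableT_comp (measurable_fun_nat _) (IH m k.+1).
Qed.

Hypothesis hind : mutually_independent U.

Lemma probability_cylinder_cons s B k I :
  uniq s -> k \notin s -> (forall i, measurable (B i)) -> measurable I ->
  P (cylinder (k :: s) [eta B with k |-> I]) =
  (P (U k @^-1` I) * P (cylinder s B))%E.
Proof.
move=> us ks mB mI; rewrite /cylinder hind /=; first last.
- by move=> i /=; case: eqP.
- by rewrite ks us.
rewrite big_cons eqxx hind //; congr (_ * _)%E.
apply: eq_big_seq => i iS /=.
by case: eqP => // ik; move: iS; rewrite ik (negbTE ks).
Qed.

Hypothesis hunif : forall k, uniform01 (U k).

Lemma ae_unit_valued : {ae P, forall w, unit_valued (fun k => U k w)}.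
Proof.
apply: ae_foralln => k.
have mN : measurable (~` [set` (`[0, 1[ : interval R)]).
  by apply: measurableC; exact: measurable_itv.
exists (U k @^-1` ~` [set` `[0, 1[]); split.
- exact: measurable_funPTI.
- apply: eq_trans (hunif k _ mN) _.
  rewrite (_ : _ `&` _ = [set 1]); first exact: lebesgue_measure_set1.
  apply/seteqP; split => x /=; rewrite !in_itv /=; last first.
    by move->; rewrite ler01 lexx ltxx.
  move=> [x_out /andP[x_ge0 x_le1]]; apply/eqP; rewrite eq_le x_le1 leNgt /=.
  by apply/negP => x_lt1; apply: x_out; rewrite x_ge0 x_lt1.
- by move=> w /=; rewrite in_itv.
Qed.

Lemma probability_jump_itv k n j : (1 < n)%N -> (0 < j < n)%N ->
  P (U k @^-1` jump_itv n j) = (j%:R / (n%:R * n.-1%:R))%:E.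
Proof.
move=> n_gt1 /andP[j_gt0 j_lt_n].
rewrite hunif; last exact: measurable_itv.
have n_gt0 : 0 < n%:R :> R by rewrite ltr0n; lia.
have n1_gt0 : 0 < n.-1%:R :> R by rewrite ltr0n; lia.
rewrite setIidl; last first.
  move=> x; rewrite /jump_itv /= !in_itv /= => /andP[jn_le_x x_lt].
  apply/andP; split; first exact: le_trans jn_le_x.
  by rewrite ltW// (lt_le_trans x_lt)// ler_pdivrMr // mul1r ler_nat; lia.
rewrite /jump_itv lebesgue_measure_itv /= lte_fin ifT; last first.
  by rewrite ltr_pM2l ?ltr0n // ltf_pV2 ?posrE // ltr_nat; lia.
rewrite -EFinD; congr EFin.
have -> : n%:R = n.-1%:R + 1 :> R by rewrite natr1 prednK //; lia.
by field; rewrite !lt0r_neq0 ?addr_gt0.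
Qed.

(* Conditioning on a cylinder in U_0, ..., U_(k-1), which is independent of
   U_k, U_(k+1), ..., is what makes the induction on the fuel go through. *)
Lemma integral_Cdelta_cylinder f n k s B :
  uniq s -> all (fun i => i < k)%N s -> (forall i, measurable (B i)) ->
  (\int[P]_(w in cylinder s B) (Cdelta f n k (fun i => U i w))%:E =
   P (cylinder s B) * (Edelta f n)%:E)%E.
Proof.
elim: f n k s B => [|f IH] n k s B us sk mB /=.
  by rewrite integral0_eq ?mule0.
case: ifP => n_gt1; last by rewrite integral0_eq ?mule0.
have mA : measurable (cylinder s B) by exact: measurable_cylinder.
have ks : k \notin s by apply/negP => /(allP sk); rewrite ltnn.
rewrite ge0_integral_1D_sum //; last 2 first.
- move=> j; apply: measurable_funM (measurable_Cdelta _ _ _).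
  by apply: measurable_indicRV; exact: measurable_itv.
- by move=> j w; rewrite mulr_ge0 ?Cdelta_ge0.
have intF j : (2 <= j < n)%N ->
    (\int[P]_(w in cylinder s B)
       (\1_(jump_itv n j) (U k w) * Cdelta f j k.+1 (fun i => U i w))%:E =
     (j%:R / (n%:R * n.-1%:R))%:E * P (cylinder s B) * (Edelta f j)%:E)%E.
  move=> /andP[j_ge2 j_lt_n]; rewrite integral_indic_cylinder // IH /=.
  - by rewrite probability_cylinder_cons ?probability_jump_itv //;
      [lia | exact: measurable_itv].
  - by rewrite ks.
  - by rewrite ltnSn; apply: sub_all sk => i /ltnW.
  - by move=> i /=; case: eqP => _; [exact: measurable_itv | exact: mB].
rewrite (eq_big_nat _ _ intF).
have [r Pr] : exists r, P (cylinder s B) = r%:E.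
  by exists (fine (P (cylinder s B))); rewrite fineK // fin_num_measure.
rewrite Pr [X in (X + _)%E]Pr; under eq_bigr do rewrite -!EFinM.
rewrite sumEFin -EFinD -EFinM mulrDr mulr1 big_distrr; congr (_ + _)%:E.
by apply: eq_bigr => j _; rewrite mulrAC [RHS]mulrC.
Qed.

End cylinder.

Theorem lemma2p4 (R : realType) (d : measure_display) (T : measurableType d)
  (P : probability T R) (U : nat -> {RV P >-> R})
  (hind : mutually_independent U) (hunif : forall k, uniform01 (U k))
  (p : nat) (hp : (1 <= p)%N) :
  (\int[P]_(w in setT)
     (`| (C p (fun k => U k w) 1)%:R - (C p.-1 (fun k => U k w) 1)%:R |%R)%:E
   <= 2%:E)%E.
Proof.
have mC q : measurable_fun setT (fun w => C q (fun k => U k w) 1).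
  exact: measurable_Cfuel.
apply: (@le_trans _ _
  (\int[P]_(w in setT) (Cdelta p p 1 (fun k => U k w))%:E)%E).
  apply: ae_ge0_le_integral => //.
  - exact: measurable_fun_nat2
      (fun a b : nat => (`|a%:R - b%:R|)%:E : \bar R) _ _ (mC p) (mC p.-1).
  - by move=> w _; rewrite lee_fin Cdelta_ge0.
  - by apply/measurable_EFinP; exact: measurable_Cdelta.
  apply: filterS (ae_unit_valued P U hunif) => w hw _.
  by rewrite lee_fin (C_increment _ hw p) // ger0_norm ?Cdelta_ge0.
rewrite -(cylinder_nil P U (fun=> setT)) integral_Cdelta_cylinder //.
by rewrite cylinder_nil probability_setT mul1e lee_fin Edelta_le2.
Qed.
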